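(* Fix $t\in\mathbb{C}$, $t\neq0$, and four-end tangles $T_1,T_2$. (i) Let $\rho$ be a trace-$t$ representation of $T_1*_vT_2$ with $u(\rho)\notin\{2,t^2-2\}$, and let $\dot u_i=\dot u(\rho|_{T_i})$, $\check u_i=\check u(\rho|_{T_i})$. Then $\dot{\mathbf{g}}=\mathbf{e}$ (where $\dot{\mathbf{g}}=\mathbf{x}^{\mathrm{ne}}\mathbf{x}^{\mathrm{se}}$ for $\rho$ on $T_1*_vT_2$) if and only if $\dot u_1=\dot u_2$ and $\check u_1+\check u_2=0$. (ii) Let $\rho$ be a trace-$t$ representation of $T_1*_hT_2$ with $\dot u(\rho)\notin\{2,t^2-2\}$, and let $u_i=u(\rho|_{T_i})$, $\check u_i=\check u(\rho|_{T_i})$. Then $\mathbf{g}=\mathbf{e}$ (where $\mathbf{g}=\mathbf{x}^{\mathrm{nw}}\mathbf{x}^{\mathrm{ne}}$ for $\rho$ on $T_1*_hT_2$) if and only if $u_1=u_2$ and $\check u_1+\check u_2=0$.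
   Context: $G=\mathrm{SL}(2,\mathbb{C})$, $\mathbf{e}$ the identity, $G(t)=\{\mathbf{x}\in G:\mathrm{tr}\,\mathbf{x}=t\}$. A four-end tangle $T$ is a tangle diagram in a disk (a 1-submanifold of a 3-ball $B$ meeting $\partial B$ in four points) with endpoints at the northwest, northeast, southwest, southeast; the end arcs, directed outward, are $T^{\mathrm{nw}},T^{\mathrm{ne}},T^{\mathrm{sw}},T^{\mathrm{se}}$. A representation of $T$ is a map $\rho$ from directed arcs to $G$ with $\rho(a^{-1})=\rho(a)^{-1}$ satisfying the Wirtinger relation $\rho(c)=\rho(a)\rho(b)\rho(a)^{-1}$ at each crossing (over-arc $a$); equivalently a homomorphism $\pi_1(B\setminus T)\to G$. It is trace-$t$ if every $\rho(a)\in G(t)$. With $\mathbf{x}^{\mathrm{ot}}=\rho(T^{\mathrm{ot}})$: $u=\mathrm{tr}(\mathbf{x}^{\mathrm{nw}}\mathbf{x}^{\mathrm{ne}})$, $\dot u=\mathrm{tr}(\mathbf{x}^{\mathrm{ne}}\mathbf{x}^{\mathrm{se}})$, $\check u=\mathrm{tr}(\mathbf{x}^{\mathrm{nw}}\mathbf{x}^{\mathrm{se}})-\mathrm{tr}(\mathbf{x}^{\mathrm{sw}}\mathbf{x}^{\mathrm{ne}})$. Vertical composition $T_1*_vT_2$: $T_1$ above $T_2$, SW (resp. SE) endpoint of $T_1$ joined to NW (resp. NE) endpoint of $T_2$. Horizontal composition $T_1*_hT_2$: $T_1$ left of $T_2$, NE (resp. SE) endpoint of $T_1$ joined to NW (resp.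 SW) endpoint of $T_2$. $\rho|_{T_i}$ denotes restriction. (Representations with $\dot{\mathbf{g}}=\mathbf{e}$, resp. $\mathbf{g}=\mathbf{e}$, are exactly representations of the denominator closure $D(T)$, joining NW to SW and NE to SE, resp. numerator closure $N(T)$, joining NW to NE and SW to SE.) *)

(* Complex numbers are modelled as [R[i]] (mathcomp-real-closed
   [complex]) over an arbitrary [R : realType]; every realType is a complete
   archimedean ordered field, i.e. a copy of the reals, so [R[i]] is a copy of C. *)
From HB Require Import structures.
From mathcomp Require Import all_boot all_order all_algebra.
From mathcomp Require Import reals.
From mathcomp Require Import complex.
Set Implicit Arguments. Unset Strict Implicit. Unset Printing Implicit Defensive.
Import Order.TTheory GRing.Theory Num.Theory.
Local Open Scope ring_scope.

(* Four-end tangle diagrams, in Morse ("stacked") form.                      *)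
(* A diagram is read from top to bottom as a word of elementary moves acting  *)
(* on a row of strand positions 0,1,...,w-1 (left to right):                  *)
(*  - [Cross i true]  : strands at positions i,i+1 cross; the over-strand goes *)
(*                      from top-left (i) to bottom-right (i+1);             *)
(*  - [Cross i false] : same, the over-strand goes from top-right (i+1) to    *)
(*                      bottom-left (i);                                     *)
(*  - [Cup i]         : a local maximum creating two new strands at positions *)
(*                      i,i+1 (needs i <= w);                                *)
(*  - [Cap i]         : a local minimum joining the strands at positions i,i+1.*)
(* Every tangle diagram in a disk is planar isotopic to such a word.  A       *)
(* four-end tangle starts with 2 strands (NW, NE) and ends with 2 (SW, SE).   *)

Inductive move := Cross of nat & bool | Cup of nat | Cap of nat.

Definition move_width (w : nat) (m : move) : option nat :=
  match m with
  | Cross i _ => if (i.+1 < w)%N then Some w else None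
  | Cup i => if (i <= w)%N then Some w.+2 else None
  | Cap i => if (i.+1 < w)%N then Some w.-2 else None
  end.

Fixpoint word_width (w : nat) (s : seq move) : option nat :=
  match s with
  | [::] => Some w
  | m :: s' => if move_width w m is Some w' then word_width w' s' else None
  end.

Definition tangle := seq move.

Definition is_tangle (T : tangle) : Prop := word_width 2 T = Some 2%N.

Definition shift_move (k : nat) (m : move) : move :=
  match m with
  | Cross i b => Cross (i + k) b
  | Cup i => Cup (i + k)
  | Cap i => Cap (i + k)
  end.

(* T1 above T2, SW/SE of T1 joined to NW/NE of T2. *)
Definition vcomp (T1 T2 : tangle) : tangle := T1 ++ T2.

(* T1 left of T2: an arc (Cup 1) joins NE of T1 to NW of T2 at the top, T1 is
   performed on the left strands, then T2 on the right strands, and an arc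
   (Cap 1) joins SE of T1 to SW of T2 at the bottom. *)
Definition hcomp (T1 T2 : tangle) : tangle :=
  Cup 1 :: T1 ++ map (shift_move 2) T2 ++ [:: Cap 1].

(* Representations.  A representation is recorded level by level: level k is *)
(* the row of matrices rho(a) for the strands between move k-1 and move k,    *)
(* each arc being directed DOWNWARD (the opposite direction gets the          *)
(* inverse, rho(a^-1) = rho(a)^-1).  Same arc => same matrix; a cup/cap turns *)
(* the direction around (hence the inverse); at a crossing with over-arc a    *)
(* and under-arc passing from b (above) to c (below) the Wirtinger relation   *)
(* is c = a b a^-1 (resp. its mirror c = a^-1 b a for the mirror crossing).   *)

Section Rep.
Variable F : comUnitRingType.
Notation M := ('M[F]_2).

Definition inSL2 (x : M) : bool := \det x == 1.

Definition step (m : move) (l l' : seq M) : Prop :=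
  match m with
  | Cross i true =>
      let a := nth 0 l i in let b := nth 0 l i.+1 in
      l' = take i l ++ [:: a * b * a^-1; a] ++ drop i.+2 l
  | Cross i false =>
      let b := nth 0 l i in let a := nth 0 l i.+1 in
      l' = take i l ++ [:: a; a^-1 * b * a] ++ drop i.+2 l
  | Cup i => exists y : M, l' = take i l ++ [:: y; y^-1] ++ drop i l
  | Cap i => nth 0 l i.+1 = (nth 0 l i)^-1 /\ l' = take i l ++ drop i.+2 l
  end.

Definition is_rep (T : tangle) (L : seq (seq M)) : Prop :=
  [/\ size L = (size T).+1,
      size (nth [::] L 0) = 2%N,
      (forall k, (k < size L)%N -> all inSL2 (nth [::] L k)) &
      (forall k, (k < size T)%N -> step (nth (Cap 0) T k) (nth [::] L k) (nth [::] L k.+1))].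

Definition is_trace_rep (t : F) (T : tangle) (L : seq (seq M)) : Prop :=
  is_rep T L /\ (forall k, (k < size L)%N -> all (fun x => \tr x == t) (nth [::] L k)).

(* End arcs, directed outward: upward at the top, downward at the bottom. *)
Definition top (L : seq (seq M)) := nth [::] L 0.
Definition bot (L : seq (seq M)) := last [::] L.
Definition x_nw (L : seq (seq M)) : M := (nth 0 (top L) 0)^-1.
Definition x_ne (L : seq (seq M)) : M := (nth 0 (top L) 1)^-1.
Definition x_sw (L : seq (seq M)) : M := nth 0 (bot L) 0.
Definition x_se (L : seq (seq M)) : M := nth 0 (bot L) 1.

Definition u_inv (L : seq (seq M)) : F := \tr (x_nw L * x_ne L).
Definition ud_inv (L : seq (seq M)) : F := \tr (x_ne L * x_se L).
Definition uc_inv (L : seq (seq M)) : F :=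
  \tr (x_nw L * x_se L) - \tr (x_sw L * x_ne L).

Definition g_elt (L : seq (seq M)) : M := x_nw L * x_ne L.
Definition gd_elt (L : seq (seq M)) : M := x_ne L * x_se L.

Definition vres1 (T1 : tangle) (L : seq (seq M)) := take (size T1).+1 L.
Definition vres2 (T1 : tangle) (L : seq (seq M)) := drop (size T1) L.
Definition hres1 (T1 : tangle) (L : seq (seq M)) :=
  [seq take (size l - 2) l | l <- take (size T1).+1 (drop 1 L)].
Definition hres2 (T1 T2 : tangle) (L : seq (seq M)) :=
  [seq drop 2 l | l <- take (size T2).+1 (drop (size T1).+1 L)].

End Rep.

(* Read a representation level by level: every move preserves the ordered
   product of the matrices on a level.  For [T1 *v T2] with top, junction and
   bottom levels [a0; a1], [a; b], [c; d] this gives [a0 a1 = a b = c d], and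
   the closure condition [a1^-1 d = 1] compares two trace-[t] matrices [a1],
   [d] which also have equal traces against [m = (a b)^-1].  Over a field of
   characteristic other than 2, a 2x2 matrix is determined by its traces
   against [1], [m], [y] and [m y - y m] whenever [det (m y - y m) != 0]; for
   [y = b] this determinant is [(2 - u) (2 + u - t^2)] with [u = tr m], and
   the two remaining traces are exactly the conditions on [u-dot] and
   [u-check].  The horizontal case is the same argument with [y] the matrix
   on the connecting arc and [m = c1 y^-1]. *)

From HB Require Import structures.
From mathcomp Require Import all_boot all_order all_algebra.
From mathcomp Require Import reals complex.
From mathcomp Require Import ring zify.
Set Implicit Arguments. Unset Strict Implicit. Unset Printing Implicit Defensive.
Import Order.TTheory GRing.Theory Num.Theory.
Local Open Scope ring_scope.

Section UnitRing.
Variable R : unitRingType.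
Implicit Types x y : R.

Lemma mulVr_eq1 x y : x \is a GRing.unit -> x^-1 * y = 1 <-> x = y.
Proof.
by move=> ux; split=> [xy1 | <-]; [rewrite -[y](mulVKr ux) xy1 mulr1 | exact: mulVr].
Qed.

Lemma mulrV_eq1 x y : y \is a GRing.unit -> x * y^-1 = 1 <-> x = y.
Proof.
by move=> uy; split=> [xy1 | ->]; [rewrite -[x](mulrVK uy) xy1 mul1r | exact: mulrV].
Qed.

End UnitRing.

Lemma mxtrace_mulrC (R : comNzRingType) n (A B : 'M[R]_n.+1) : \tr (A * B) = \tr (B * A).
Proof. exact: mxtrace_mulC. Qed.

Section Mx2.
Variable F : comNzRingType.
Implicit Types (A B : 'M[F]_2) (f : 'I_2 -> F).

Lemma sum_ord2 f : \sum_(i < 2) f i = f 0 + f 1.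
Proof. by rewrite !big_ord_recl big_ord0 addr0; congr (f _ + f _); apply/val_inj. Qed.

Lemma ord2P (i : 'I_2) : i = 0 \/ i = 1.
Proof. by case: i => [[|[|//]] ?]; [left|right]; apply/val_inj. Qed.

Lemma det_mx2 A : \det A = A 0 0 * A 1 1 - A 0 1 * A 1 0.
Proof.
rewrite (expand_det_row _ 0) sum_ord2 /cofactor !det_mx11 !mxE /= expr0 expr1.
have -> : lift 0 (0 : 'I_1) = 1 :> 'I_2 by apply/val_inj.
have -> : lift 1 (0 : 'I_1) = 0 :> 'I_2 by apply/val_inj.
by rewrite mul1r mulN1r mulrN.
Qed.

Lemma mxtrace_mx2 A : \tr A = A 0 0 + A 1 1.
Proof. exact: sum_ord2. Qed.

Lemma mulmx2E A B i j : (A * B) i j = A i 0 * B 0 j + A i 1 * B 1 j.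
Proof. by rewrite -mulmxE mxE sum_ord2. Qed.

End Mx2.

Ltac mx2_ext :=
  apply/matrixP; let i := fresh "i" in let j := fresh "j" in
  move=> i j; case: (ord2P i) => ->; case: (ord2P j) => ->;
  rewrite ?(det_mx2, mxtrace_mx2, mulmx2E, sum_ord2, mxE) /= ?mulr1n ?mulr0n.

Section Mx2Identities.
Variable F : comNzRingType.
Implicit Types (d m y : 'M[F]_2).

Lemma det_commutator_mx2 m y :
  \det (m * y - y * m) = 4 * \det m * \det y - (\tr m) ^+ 2 * \det y
    - (\tr y) ^+ 2 * \det m - (\tr (m * y)) ^+ 2 + \tr m * \tr y * \tr (m * y).
Proof. by rewrite !det_mx2 !mxtrace_mx2 !(mxE, mulmx2E, sum_ord2); ring. Qed.

(* Since [tr c = 0], [c * c] is the scalar [- det c], so the right-hand side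
   is a combination of [1], [m], [y], [c] whose coefficients are traces of [d]. *)
Lemma mx2_trace_decomposition d m y (c := m * y - y * m) :
  (8 * \det c) *: d =
  - (((4 * \tr (d * m) - 2 * \tr d * \tr m) *: (2 *: y - (\tr y)%:M)
     - (4 * \tr (d * y) - 2 * \tr d * \tr y) *: (2 *: m - (\tr m)%:M)) * c)
  - (4 * \tr d) *: (c * c) - (4 * \tr (d * c)) *: c.
Proof. by rewrite /c; mx2_ext; ring. Qed.

End Mx2Identities.

Section SL2.
Variable F : comUnitRingType.
Implicit Types x y : 'M[F]_2.

Lemma unitmx_det1 x : \det x = 1 -> x \is a GRing.unit.
Proof. by move=> dx; rewrite unitmxE dx unitr1. Qed.

Lemma invmx_SL2 x : \det x = 1 -> x^-1 = (\tr x)%:M - x.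
Proof.
move=> dx; have inv_r : x * ((\tr x)%:M - x) = 1.
  by move: dx; rewrite det_mx2 mxtrace_mx2 => dx; mx2_ext; rewrite -?dx; ring.
by rewrite -[LHS]mulr1 -inv_r mulKr ?unitmx_det1.
Qed.

Lemma det_invmx_SL2 x : \det x = 1 -> \det x^-1 = 1.
Proof. by move=> dx; rewrite [x^-1]/(invmx x) det_inv dx invr1. Qed.

Lemma mxtraceV_SL2 x : \det x = 1 -> \tr x^-1 = \tr x.
Proof. by move=> dx; rewrite invmx_SL2 // raddfB /= mxtrace_scalar mulr2n addrK. Qed.

Lemma mxtrace_mulVl_SL2 x y : \det x = 1 -> \tr (x^-1 * y) = \tr x * \tr y - \tr (x * y).
Proof. by move=> dx; rewrite invmx_SL2 // mulrBl raddfB /= -mulmxE mul_scalar_mx mxtraceZ. Qed.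

Lemma mxtrace_mulVr_SL2 x y : \det y = 1 -> \tr (x * y^-1) = \tr x * \tr y - \tr (x * y).
Proof.
by move=> dy; rewrite invmx_SL2 // mulrBr raddfB /= -mulmxE mul_mx_scalar mxtraceZ mulrC.
Qed.

Lemma mxtrace_mulV_SL2C x y : \det x = 1 -> \det y = 1 -> \tr (x * y^-1) = \tr (y * x^-1).
Proof. by move=> dx dy; rewrite !mxtrace_mulVr_SL2 // mulrC mxtrace_mulrC. Qed.

End SL2.

Section TraceCoordinates.
Variable F : fieldType.
Hypothesis two_neq0 : 2 != 0 :> F.
Implicit Types m y : 'M[F]_2.

Lemma mx2_eq_mxtrace (X1 X2 : 'M[F]_2) m y (c := m * y - y * m) :
  \det c != 0 -> \tr X1 = \tr X2 -> \tr (X1 * m) = \tr (X2 * m) ->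
  \tr (X1 * y) = \tr (X2 * y) -> \tr (X1 * c) = \tr (X2 * c) -> X1 = X2.
Proof.
move=> c_neq0 tr1 trm try trc; apply/eqP; rewrite -subr_eq0.
have tr0 z : \tr (X1 * z) = \tr (X2 * z) -> \tr ((X1 - X2) * z) = 0.
  by move=> trz; rewrite mulrBl raddfB /= trz subrr.
have tr_diff : \tr (X1 - X2) = 0 by rewrite raddfB /= tr1 subrr.
have := mx2_trace_decomposition (X1 - X2) m y; rewrite [in X in X -> _]/= -/c.
rewrite tr_diff (tr0 m) // (tr0 y) // (tr0 c) //.
rewrite !(mulr0, mul0r, subrr, scale0r, oppr0, subr0) => /eqP.
rewrite scaler_eq0 mulf_eq0 (negbTE c_neq0) orbF => /orP[|//].
by rewrite (_ : 8 = 2 ^+ 3) ?expf_eq0 ?(negbTE two_neq0) // -natrX.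
Qed.

Lemma det_commutator_SL2 (t : F) m y :
  \det m = 1 -> \det y = 1 -> \tr y = t -> \tr (m * y) = t ->
  \det (m * y - y * m) = (2 - \tr m) * (2 + \tr m - t ^+ 2).
Proof. by move=> dm dy try trmy; rewrite det_commutator_mx2 dm dy try trmy; ring. Qed.

(* The two excluded values of [tr m] are the zeros of [det (m y - y m)]. *)
Lemma SL2_eq_iff_mxtrace (t : F) m y (X1 X2 : 'M[F]_2) (c := m * y - y * m) :
  \det m = 1 -> \det y = 1 -> \tr y = t -> \tr (m * y) = t ->
  \tr m != 2 -> \tr m != t ^+ 2 - 2 ->
  \tr X1 = \tr X2 -> \tr (X1 * m) = \tr (X2 * m) ->
  X1 = X2 <-> \tr (X1 * y) = \tr (X2 * y) /\ \tr (X1 * c) = \tr (X2 * c).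
Proof.
move=> dm dy try trmy trm_neq2 trm_neq tr12 trm12.
split=> [-> // | [try12 trc12]]; apply: mx2_eq_mxtrace tr12 trm12 try12 trc12.
rewrite (det_commutator_SL2 dm dy try trmy) mulf_neq0 //.
  by rewrite subr_eq0 eq_sym.
by apply: contra trm_neq => /eqP h; apply/eqP; rewrite -[RHS]addr0 -h; ring.
Qed.

Lemma vcomp_mx_criterion (t : F) (a0 a1 a b c d : 'M[F]_2) :
  {in [:: a0; a1; a; b; c; d], forall x, \det x = 1 /\ \tr x = t} ->
  a0 * a1 = a * b -> a * b = c * d ->
  \tr (a0^-1 * a1^-1) != 2 -> \tr (a0^-1 * a1^-1) != t ^+ 2 - 2 ->
  a1^-1 * d = 1 <->
  \tr (a1^-1 * b) = \tr (b^-1 * d) /\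
  \tr (a0^-1 * b) - \tr (a * a1^-1) + (\tr (a^-1 * d) - \tr (c * b^-1)) = 0.
Proof.
move=> /forall_cons[[da0 ta0]] /forall_cons[[da1 ta1]] /forall_cons[[da ta]].
move=> /forall_cons[[db tb]] /forall_cons[[dc tc]] /forall_cons[[dd td] _].
move=> top_mid mid_bot; have unit := @unitmx_det1 F.
move Em : (a * b)^-1 => m; set k := m * b - b * m.
have a0V : a0^-1 = a1 * m by rewrite -Em -top_mid invrM ?unit // mulVKr ?unit.
have aV : a^-1 = b * m by rewrite -Em invrM ?unit // mulVKr ?unit.
have cV : c^-1 = d * m by rewrite -Em mid_bot invrM ?unit // mulVKr ?unit.
have dm : \det m = 1 by rewrite -Em det_invmx_SL2 // detM da db mulr1.
have trm : \tr m = \tr (a0^-1 * a1^-1).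
  by rewrite -Em mxtrace_mulrC -invrM ?unit // top_mid.
have trmb : \tr (m * b) = t by rewrite mxtrace_mulrC -aV mxtraceV_SL2.
have trm12 : \tr (a1 * m) = \tr (d * m) by rewrite -a0V -cV !mxtraceV_SL2 // ta0 tc.
have ud_iff : \tr (a1^-1 * b) = \tr (b^-1 * d) <-> \tr (a1 * b) = \tr (d * b).
  rewrite !mxtrace_mulVl_SL2 // ta1 tb td (mxtrace_mulrC b d).
  by split=> [/subrI | ->].
have uc_sum : \tr (a0^-1 * b) - \tr (a * a1^-1) + (\tr (a^-1 * d) - \tr (c * b^-1))
    = \tr (a1 * k) - \tr (d * k).
  rewrite (mxtrace_mulV_SL2C da da1) (mxtrace_mulV_SL2C dc db) a0V aV cV.
  rewrite /k !mulrBr !raddfB /= !mulrA (mxtrace_mulrC (b * m) d).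
  by rewrite -(mulrA b d m) (mxtrace_mulrC b (d * m)) !mulrA; ring.
rewrite -trm => trm_neq2 trm_neq.
have key :=
  SL2_eq_iff_mxtrace dm db tb trmb trm_neq2 trm_neq (etrans ta1 (esym td)) trm12.
rewrite mulVr_eq1 ?unit // uc_sum -/k; split=> [a1d | [/ud_iff try12 /eqP]].
  by split; [apply/ud_iff | apply/eqP; rewrite subr_eq0]; rewrite a1d.
by rewrite subr_eq0 => /eqP trk12; apply/key.
Qed.

Lemma hcomp_mx_criterion (t : F) (p q y c0 c1 c3 : 'M[F]_2) :
  {in [:: p; q; y; c0; c1; c3], forall x, \det x = 1 /\ \tr x = t} ->
  p * y = c0 * c1 -> y^-1 * q = c1^-1 * c3 ->
  \tr (q^-1 * c3) != 2 -> \tr (q^-1 * c3) != t ^+ 2 - 2 ->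
  p^-1 * q^-1 = 1 <->
  \tr (p^-1 * y^-1) = \tr (y * q^-1) /\
  \tr (p^-1 * c1) - \tr (c0 * y^-1) + (\tr (y * c3) - \tr (c1^-1 * q^-1)) = 0.
Proof.
move=> /forall_cons[[dp tp]] /forall_cons[[dq tq]] /forall_cons[[dy ty]].
move=> /forall_cons[[dc0 tc0]] /forall_cons[[dc1 tc1]] /forall_cons[[dc3 tc3] _].
move=> left_top right_top; have unit := @unitmx_det1 F.
move Em : (c1 * y^-1) => m; set k := m * y - y * m.
have c1E : c1 = m * y by rewrite -Em mulrVK ?unit.
have c0V : c0^-1 = m * p^-1.
  by rewrite -Em -mulrA -invrM ?unit // left_top invrM ?unit // mulVKr ?unit.
have c3E : c3 = m * q by rewrite -Em -mulrA right_top mulVKr ?unit.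
have dm : \det m = 1 by rewrite -Em detM dc1 det_invmx_SL2 // mulr1.
have trm : \tr m = \tr (q^-1 * c3) by rewrite c3E (mxtrace_mulrC q^-1) mulrK ?unit.
have trmy : \tr (m * y) = t by rewrite -c1E.
have trp : \tr p^-1 = \tr q by rewrite mxtraceV_SL2 // tp tq.
have trm12 : \tr (p^-1 * m) = \tr (q * m).
  by rewrite !(mxtrace_mulrC _ m) -c0V -c3E mxtraceV_SL2 // tc0 tc3.
have u_iff : \tr (p^-1 * y^-1) = \tr (y * q^-1) <-> \tr (p^-1 * y) = \tr (q * y).
  rewrite !mxtrace_mulVr_SL2 // trp ty (mxtrace_mulrC y q) mulrC.
  by split=> [/subrI | ->].
have uc_sum : \tr (p^-1 * c1) - \tr (c0 * y^-1) + (\tr (y * c3) - \tr (c1^-1 * q^-1))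
    = \tr (p^-1 * k) - \tr (q * k).
  rewrite (mxtrace_mulV_SL2C dc0 dy) -invrM ?unit // mxtraceV_SL2; last first.
    by rewrite detM dq dc1 mulr1.
  rewrite c0V c3E c1E /k !mulrBr !raddfB /= !mulrA.
  by rewrite (mxtrace_mulrC (y * m) p^-1) (mxtrace_mulrC (y * m) q) !mulrA; ring.
rewrite -trm => trm_neq2 trm_neq.
have key := SL2_eq_iff_mxtrace dm dy ty trmy trm_neq2 trm_neq trp trm12.
rewrite mulrV_eq1 ?unit // uc_sum -/k; split=> [pq | [/u_iff try12 /eqP]].
  by split; [apply/u_iff | apply/eqP; rewrite subr_eq0]; rewrite pq.
by rewrite subr_eq0 => /eqP trk12; apply/key.
Qed.

End TraceCoordinates.

Section SeqMid.
Variable T : Type.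

Lemma take_mid (r1 l r2 : seq T) i : (i <= size l)%N ->
  take (i + size r1) (r1 ++ l ++ r2) = r1 ++ take i l.
Proof. by move=> le_il; rewrite take_cat ltnNge leq_addl /= addnK takel_cat. Qed.

Lemma drop_mid (r1 l r2 : seq T) i : (i <= size l)%N ->
  drop (i + size r1) (r1 ++ l ++ r2) = drop i l ++ r2.
Proof.
move=> le_il; rewrite drop_cat ltnNge leq_addl /= addnK drop_cat.
case: ltnP => // ge_il.
have -> : i = size l by apply/eqP; rewrite eqn_leq le_il.
by rewrite subnn drop_size drop0.
Qed.

Lemma nth_mid x0 (r1 l r2 : seq T) i : (i < size l)%N ->
  nth x0 (r1 ++ l ++ r2) (i + size r1) = nth x0 l i.
Proof. by move=> lt_il; rewrite nth_cat ltnNge leq_addl /= addnK nth_cat lt_il. Qed.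

Lemma cat_take_pair_drop x0 (l : seq T) i : (i.+1 < size l)%N ->
  l = take i l ++ [:: nth x0 l i; nth x0 l i.+1] ++ drop i.+2 l.
Proof.
move=> lt_il; rewrite -{1}(cat_take_drop i l).
by rewrite (drop_nth x0 (ltnW lt_il)) (drop_nth x0 lt_il).
Qed.

End SeqMid.

Lemma map_shift_move0 s : map (shift_move 0) s = s.
Proof. by rewrite -[RHS]map_id; apply: eq_map => -[i b | i | i] /=; rewrite addn0. Qed.

Section Levels.
Variable F : comUnitRingType.
Notation M := 'M[F]_2.
Implicit Types (l : seq M) (L : seq (seq M)) (s : seq move).

Definition follows s L : Prop :=
  forall k, (k < size s)%N -> step (nth (Cap 0) s k) (nth [::] L k) (nth [::] L k.+1).

Lemma follows_cat s1 s2 L :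
  follows (s1 ++ s2) L -> follows s1 L /\ follows s2 (drop (size s1) L).
Proof.
move=> run; split=> k lt_k.
  by have := run k; rewrite nth_cat lt_k size_cat; apply; apply: ltn_addr.
have lt_s1 : (size s1 + k < size s1)%N = false by rewrite ltnNge leq_addr.
have := run (size s1 + k); rewrite nth_cat lt_s1 addKn !nth_drop addnS.
by apply; rewrite size_cat ltn_add2l.
Qed.

Lemma step_mid m (r1 l r2 : seq M) l' w' :
  move_width (size l) m = Some w' -> step (shift_move (size r1) m) (r1 ++ l ++ r2) l' ->
  exists2 l1, l' = r1 ++ l1 ++ r2 & step m l l1.
Proof.
case: m => [i [] | i | i] /=; case: ifP => // lt_il _;
  rewrite -?addSn ?nth_mid ?take_mid ?drop_mid //; try lia.
- by move=> ->; eexists; last reflexivity; rewrite -!catA.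
- by move=> ->; eexists; last reflexivity; rewrite -!catA.
- by move=> [y ->]; eexists; last (exists y; reflexivity); rewrite -!catA.
- by move=> [ll' ->]; eexists; last (split; [exact: ll' | reflexivity]); rewrite -!catA.
Qed.

Lemma step_size m l l' w' : move_width (size l) m = Some w' -> step m l l' -> size l' = w'.
Proof.
case: m => [i [] | i | i] /=; case: ifP => // lt_il [<-];
  [move=> -> | move=> -> | move=> [y ->] | move=> [_ ->]];
  rewrite !size_cat /= size_takel ?size_drop; lia.
Qed.

Lemma step_prod m l l' w' :
  move_width (size l) m = Some w' ->
  all (fun x => x \is a GRing.unit) l -> all (fun x => x \is a GRing.unit) l' ->
  step m l l' -> \prod_(x <- l') x = \prod_(x <- l) x.
Proof.
have prodE := (big_cat, big_cons, big_nil).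
case: m => [i [] | i | i] /=; case: ifP => // lt_il _ units units'.
- have ua : l`_i \is a GRing.unit by apply: (allP units); rewrite mem_nth // ltnW.
  by move=> ->; rewrite [in RHS](cat_take_pair_drop 0 lt_il) !prodE /= ?mulr1 !mulrA mulrVK.
- have ua : l`_i.+1 \is a GRing.unit by apply: (allP units); rewrite mem_nth.
  by move=> ->; rewrite [in RHS](cat_take_pair_drop 0 lt_il) !prodE /= ?mulr1 !mulrA mulrK.
- move=> [y l'E]; move: units'; rewrite l'E !all_cat /= => /and4P[_ uy _ _].
  by rewrite -[in RHS](cat_take_drop i l) !prodE /= ?mulr1 !mulrA mulrK.
- have ua : l`_i \is a GRing.unit by apply: (allP units); rewrite mem_nth // ltnW.
  move=> [lV ->]; rewrite [in RHS](cat_take_pair_drop 0 lt_il) lV.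
  by rewrite !prodE /= ?mulr1 !mulrA mulrK.
Qed.

Lemma follows_mid s L (r1 l r2 : seq M) w w' :
  word_width w s = Some w' -> size l = w -> nth [::] L 0 = r1 ++ l ++ r2 ->
  (forall k, all (fun x => x \is a GRing.unit) (nth [::] L k)) ->
  follows (map (shift_move (size r1)) s) L ->
  exists l', [/\ nth [::] L (size s) = r1 ++ l' ++ r2, size l' = w'
               & \prod_(x <- l') x = \prod_(x <- l) x].
Proof.
elim: s L l w => [|m s IH] L l w /=; first by move=> [<-] <- L0; exists l.
case wm: move_width => [w1|] // ws size_l L0 units.
move=> /(follows_cat (s1 := [:: _])) [run0 run].
have st0 := run0 0 isT; rewrite /= L0 in st0; rewrite -size_l in wm.
have [l1 L1 st1] := step_mid wm st0.
have := units 0; rewrite L0 !all_cat => /and3P[_ units_l _].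
have := units 1; rewrite L1 !all_cat => /and3P[_ units_l1 _].
have [|||l' [L' size_l' prod_l']] := IH (drop 1 L) l1 w1 ws (step_size wm st1).
- by rewrite nth_drop.
- by move=> k; rewrite nth_drop.
- exact: run.
by exists l'; rewrite -L' nth_drop prod_l' (step_prod wm units_l units_l1 st1).
Qed.

Lemma follows_left s L (l r : seq M) w w' :
  word_width w s = Some w' -> size l = w -> nth [::] L 0 = l ++ r ->
  (forall k, all (fun x => x \is a GRing.unit) (nth [::] L k)) -> follows s L ->
  exists l', [/\ nth [::] L (size s) = l' ++ r, size l' = w'
               & \prod_(x <- l') x = \prod_(x <- l) x].
Proof.
move=> ws size_l L0 units run.
by apply: (follows_mid (r1 := [::]) ws size_l L0 units); rewrite map_shift_move0.
Qed.

Lemma prod_pair (x y : M) : \prod_(z <- [:: x; y]) z = x * y.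
Proof. by rewrite !big_cons big_nil mulr1. Qed.

End Levels.

Section Ends.
Variable F : comUnitRingType.
Notation M := 'M[F]_2.
Implicit Types (L : seq (seq M)) (f : seq M -> seq M).

Lemma top_map f L : f [::] = [::] -> top (map f L) = f (top L).
Proof. by case: L. Qed.

Lemma bot_map f L : f [::] = [::] -> bot (map f L) = f (bot L).
Proof. by rewrite /bot => f0; rewrite -{1}f0 last_map. Qed.

Lemma top_take n L : top (take n.+1 L) = top L.
Proof. by case: L. Qed.

Lemma top_drop n L : top (drop n L) = nth [::] L n.
Proof. by rewrite /top nth_drop addn0. Qed.

Lemma bot_take n L : (n < size L)%N -> bot (take n.+1 L) = nth [::] L n.
Proof. by move=> lt_n; rewrite /bot -nth_last size_takel // nth_take. Qed.

Lemma bot_drop n L : (n < size L)%N -> bot (drop n L) = bot L.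
Proof. by move=> lt_n; rewrite /bot -!nth_last nth_drop size_drop; congr nth; lia. Qed.

Lemma trace_rep_entry t T L k x :
  is_trace_rep t T L -> x \in nth [::] L k -> \det x = 1 /\ \tr x = t.
Proof.
case=> [[_ _ SL2_rows _] trace_rows] x_in.
have lt_k : (k < size L)%N by case: ltnP x_in => // ?; rewrite nth_default.
by split; apply/eqP; [apply: (allP (SL2_rows k lt_k)) | apply: (allP (trace_rows k lt_k))].
Qed.

Lemma trace_rep_units t T L k :
  is_trace_rep t T L -> all (fun x => x \is a GRing.unit) (nth [::] L k).
Proof. by move=> rep; apply/allP=> x /(trace_rep_entry rep)[/unitmx_det1]. Qed.

End Ends.

Section Compositions.
Variable F : comUnitRingType.
Notation M := 'M[F]_2.
Implicit Types (L : seq (seq M)).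

Lemma vcomp_levels t (T1 T2 : tangle) L :
  is_tangle T1 -> is_tangle T2 -> is_trace_rep t (vcomp T1 T2) L ->
  exists a0 a1 a b c d : M,
    [/\ top L = [:: a0; a1], nth [::] L (size T1) = [:: a; b], bot L = [:: c; d],
        a0 * a1 = a * b & a * b = c * d].
Proof.
move=> T1w T2w rep; have [[size_L size_top _ run] _] := rep.
have units k := trace_rep_units k rep.
rewrite /vcomp size_cat in size_L.
have [run1 run2] := follows_cat (run : follows (T1 ++ T2) L).
rewrite -/(top L) in size_top; case top_L : (top L) size_top => [|a0 [|a1 []]] // _.
have [l1 [L1 size_l1]] :=
  follows_left (l := [:: a0; a1]) (r := [::]) T1w erefl top_L units run1.
case: l1 L1 size_l1 => [|a [|b []]] //; rewrite cats0 !prod_pair => L1 _ prod1.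
have units2 k : all (fun x => x \is a GRing.unit) (nth [::] (drop (size T1) L) k).
  by rewrite nth_drop.
have L1' : nth [::] (drop (size T1) L) 0 = [:: a; b] ++ [::] by rewrite nth_drop addn0 L1.
have [l2 [L2 size_l2]] := follows_left (l := [:: a; b]) T2w erefl L1' units2 run2.
case: l2 L2 size_l2 => [|c [|d []]] //; rewrite nth_drop cats0 !prod_pair => L2 _ prod2.
by exists a0, a1, a, b, c, d; split=> //; rewrite /bot -nth_last size_L.
Qed.

Lemma hcomp_levels t (T1 T2 : tangle) L :
  is_tangle T1 -> is_tangle T2 -> is_trace_rep t (hcomp T1 T2) L ->
  exists p q y c0 c1 c3 : M,
    [/\ top L = [:: p; q], nth [::] L 1 = [:: p; y; y^-1; q],
        nth [::] L (size T1).+1 = [:: c0; c1; y^-1; q],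
        nth [::] L (size T1 + size T2)%N.+1 = [:: c0; c1; c1^-1; c3]
      & bot L = [:: c0; c3]] /\
    p * y = c0 * c1 /\ y^-1 * q = c1^-1 * c3.
Proof.
move=> T1w T2w rep; have [[size_L size_top _ run] _] := rep.
have units k := trace_rep_units k rep.
have units_drop n k : all (fun x => x \is a GRing.unit) (nth [::] (drop n L) k).
  by rewrite nth_drop.
have [run_cup run'] := follows_cat (s1 := [:: Cup 1]) (run : follows (hcomp T1 T2) L).
have [run1 run''] := follows_cat run'; have [run2 run_cap] := follows_cat run''.
rewrite !drop_drop size_map addn1 in run2 run_cap.
rewrite (_ : size T2 + (size T1).+1 = (size T1 + size T2).+1)%N in run_cap; last by lia.
rewrite -/(top L) in size_top; case top_L : (top L) size_top => [|p [|q []]] // _.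
have := run_cup 0 isT; rewrite /= -/(top L) top_L => -[y /= L1].
have L1' : nth [::] (drop 1 L) 0 = [:: p; y] ++ [:: y^-1; q] by rewrite nth_drop.
have [l1 [LA size_l1]] :=
  follows_left (l := [:: p; y]) T1w erefl L1' (units_drop 1) run1.
case: l1 LA size_l1 => [|c0 [|c1 []]] //; rewrite nth_drop add1n !prod_pair => LA _ prodA.
have LA' : nth [::] (drop (size T1).+1 L) 0 = [:: c0; c1] ++ [:: y^-1; q] ++ [::].
  by rewrite nth_drop addn0 LA.
have [l2 [LB size_l2]] :=
  follows_mid (l := [:: y^-1; q]) T2w erefl LA' (units_drop _) run2.
case: l2 LB size_l2 => [|c2 [|c3 []]] //; rewrite nth_drop addSn !prod_pair => LB _ prodB.
have := run_cap 0 isT; rewrite /= !nth_drop addn0 addn1 LB => -[/= c2E LC].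
exists p, q, y, c0, c1, c3; rewrite -c2E; split=> //; split=> //.
rewrite /bot -nth_last size_L -LC; congr nth.
by rewrite /hcomp /= !size_cat size_map /=; lia.
Qed.

End Compositions.

Section Criteria.
Variable F : fieldType.
Hypothesis two_neq0 : 2 != 0 :> F.
Notation M := 'M[F]_2.
Implicit Types (L : seq (seq M)).

Lemma vcomp_criterion t (T1 T2 : tangle) L :
  is_tangle T1 -> is_tangle T2 -> is_trace_rep t (vcomp T1 T2) L ->
  u_inv L != 2 -> u_inv L != t ^+ 2 - 2 ->
  gd_elt L = 1 <->
  ud_inv (vres1 T1 L) = ud_inv (vres2 T1 L) /\
  uc_inv (vres1 T1 L) + uc_inv (vres2 T1 L) = 0.
Proof.
move=> T1w T2w rep.
have [a0 [a1 [a [b [c [d [top_L mid_L bot_L top_mid mid_bot]]]]]]] :=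
  vcomp_levels T1w T2w rep.
have [[size_L _ _ _] _] := rep; rewrite /vcomp size_cat in size_L.
have entries :
    {in [:: a0; a1] ++ [:: a; b] ++ [:: c; d], forall x, \det x = 1 /\ \tr x = t}.
  move=> x; rewrite !mem_cat -top_L -mid_L -bot_L /bot -nth_last.
  by case/or3P; apply: trace_rep_entry rep.
rewrite /gd_elt /ud_inv /uc_inv /u_inv /x_nw /x_ne /x_sw /x_se /vres1 /vres2.
rewrite top_take bot_take ?top_drop ?bot_drop ?size_L //; try lia.
by rewrite top_L mid_L bot_L; apply: vcomp_mx_criterion.
Qed.

Lemma hcomp_criterion t (T1 T2 : tangle) L :
  is_tangle T1 -> is_tangle T2 -> is_trace_rep t (hcomp T1 T2) L ->
  ud_inv L != 2 -> ud_inv L != t ^+ 2 - 2 ->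
  g_elt L = 1 <->
  u_inv (hres1 T1 L) = u_inv (hres2 T1 T2 L) /\
  uc_inv (hres1 T1 L) + uc_inv (hres2 T1 T2 L) = 0.
Proof.
move=> T1w T2w rep.
have [p [q [y [c0 [c1 [c3 [[top_L L1 LA LB bot_L] [left_top right_top]]]]]]]] :=
  hcomp_levels T1w T2w rep.
have [[size_L _ _ _] _] := rep; rewrite /hcomp /= !size_cat size_map /= in size_L.
have entries : {in [:: p; q; y; c0; c1; c3], forall x, \det x = 1 /\ \tr x = t}.
  have rows : {subset [:: p; q; y; c0; c1; c3] <=
                nth [::] L 1 ++ nth [::] L (size T1 + size T2)%N.+1}.
    by apply/allP; rewrite L1 LB /= !inE !eqxx ?orbT.
  by move=> x /rows; rewrite mem_cat => /orP[]; apply: trace_rep_entry rep.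
rewrite /g_elt /ud_inv /uc_inv /u_inv /x_nw /x_ne /x_sw /x_se /hres1 /hres2.
rewrite !top_map ?bot_map // !top_take !top_drop !bot_take ?size_drop ?size_L; try lia.
rewrite !nth_drop add1n addSn top_L bot_L L1 LA LB /= invrK.
exact: hcomp_mx_criterion.
Qed.

End Criteria.

Theorem mainTheorem5 (R : realType) (t : R[i]) (T1 T2 : tangle) :
  t != 0 -> is_tangle T1 -> is_tangle T2 ->
  (forall L : seq (seq 'M[R[i]]_2),
     is_trace_rep t (vcomp T1 T2) L ->
     u_inv L != 2 -> u_inv L != t ^+ 2 - 2 ->
     (gd_elt L = 1 <->
        (ud_inv (vres1 T1 L) = ud_inv (vres2 T1 L) /\
         uc_inv (vres1 T1 L) + uc_inv (vres2 T1 L) = 0)))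
  /\
  (forall L : seq (seq 'M[R[i]]_2),
     is_trace_rep t (hcomp T1 T2) L ->
     ud_inv L != 2 -> ud_inv L != t ^+ 2 - 2 ->
     (g_elt L = 1 <->
        (u_inv (hres1 T1 L) = u_inv (hres2 T1 T2 L) /\
         uc_inv (hres1 T1 L) + uc_inv (hres2 T1 T2 L) = 0))).
Proof.
have two_neq0 : 2 != 0 :> R[i] by rewrite pnatr_eq0.
move=> _ T1w T2w; split=> L rep.
- exact: (vcomp_criterion two_neq0 T1w T2w rep).
- exact: (hcomp_criterion two_neq0 T1w T2w rep).
Qed.
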